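(* Let $H\ge1$, $d_0=d_x$, $d_{H+1}=d_y$, and widths $d_1,\dots,d_H$ with $d_j\ge\min\{d_x,d_y\}$ for all $j$. For $W_j\in\mathbb{R}^{d_j\times d_{j-1}}$, $j\in[H+1]$, write $W_{H+1:1}=W_{H+1}W_H\cdots W_1$. Let $\ell_0:\mathbb{R}^{d_y\times d_x}\to\mathbb{R}$ be differentiable and assume every critical point of $\ell_0$ is a global minimum (resp. global maximum) of $\ell_0$. Define $\ell((W_j)_{j=1}^{H+1})=\ell_0(W_{H+1:1})$. Then for any critical point $(\hat W_j)_{j=1}^{H+1}$ of $\ell$: if $\nabla\ell_0(\hat W_{H+1:1})\ne0$ then $(\hat W_j)_{j=1}^{H+1}$ is a saddle point of $\ell$, and if $\nabla\ell_0(\hat W_{H+1:1})=0$ then $(\hat W_j)_{j=1}^{H+1}$ is a global minimum (resp. global maximum) of $\ell$.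
   Context: A saddle point is a critical point that is neither a local minimum nor a local maximum. $[a]=\{1,\dots,a\}$. *)

From HB Require Import structures.
From mathcomp Require Import all_boot all_order all_algebra.
From mathcomp Require Import all_classical all_reals all_analysis.
Set Implicit Arguments. Unset Strict Implicit. Unset Printing Implicit Defensive.
Import Order.TTheory GRing.Theory Num.Theory.
Import numFieldNormedType.Exports.
Local Open Scope ring_scope.

Section DeepLinear.
Variables (R : realType) (d : nat -> nat) (H : nat).

(* Parameters (W_j)_{j=1}^{H+1}: component j : 'I_(H+1) (0-based) is the
   matrix W_{j+1} in R^{d_{j+1} x d_j}. *)
Definition params := forall j : 'I_H.+1, 'M[R]_(d j.+1, d j).

(* W_{k+1} as a function of a natural index k (zero when k > H, never used). *)
Definition Wnat (W : params) (k : nat) : 'M[R]_(d k.+1, d k) :=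
  match (k < H.+1)%N as b return ((k < H.+1)%N = b -> 'M[R]_(d k.+1, d k)) with
  | true => fun h => W (Ordinal h)
  | false => fun _ => 0
  end erefl.

Fixpoint prodW (W : params) (k : nat) : 'M[R]_(d k, d 0) :=
  match k with
  | 0 => 1%:M
  | k'.+1 => Wnat W k' *m prodW W k'
  end.

Definition prodAll (W : params) : 'M[R]_(d H.+1, d 0) := prodW W H.+1.

Definition loss (ell0 : 'M[R]_(d H.+1, d 0) -> R) (W : params) : R :=
  ell0 (prodAll W).

Definition params_line (W V : params) (t : R) : params :=
  fun j => W j + t *: V j.

(* Critical point of f on the parameter space: every directional derivative
   at W exists and vanishes (equivalently, the gradient is zero, since the
   loss is differentiable). *)
Definition crit_point (f : params -> R) (W : params) : Prop :=
  forall V : params, is_derive (0 : R) (1 : R) (fun t : R => f (params_line W V t)) 0.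

Definition local_min (f : params -> R) (W : params) : Prop :=
  exists2 e : R, 0 < e &
    forall W' : params, (forall j, ball (W j) e (W' j)) -> f W <= f W'.

Definition local_max (f : params -> R) (W : params) : Prop :=
  exists2 e : R, 0 < e &
    forall W' : params, (forall j, ball (W j) e (W' j)) -> f W' <= f W.

Definition saddle_point (f : params -> R) (W : params) : Prop :=
  crit_point f W /\ ~ local_min f W /\ ~ local_max f W.

Definition global_min (f : params -> R) (W : params) : Prop :=
  forall W' : params, f W <= f W'.

Definition global_max (f : params -> R) (W : params) : Prop :=
  forall W' : params, f W' <= f W.

End DeepLinear.

(* Let W be a local minimum (or maximum) of ell = ell0 o W_{H+1:1} and let Phi be
   the set of parameters near W with the same product W_{H+1:1}.  Every W' in Phi
   is still a local extremum, so Fermat's rule along the line that moves only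
   layer j+1 shows that L := d ell0 (W_{H+1:1}) vanishes on every layer variation
   W'_{H+1:j+2} X W'_{j:1}.  If d_{H+1} <= d_j for all hidden j, a downward
   induction shows that L vanishes on V W'_{n:1} for all V: either W'_{H+1:n+2}
   has a right inverse, or one of its kernel directions can be added to W'_{n+1}
   without leaving Phi, and comparing the previous step before and after this
   move isolates V W'_{n:1}.  At n = 0 this gives L = 0.  If d_0 <= d_j, the
   mirror induction uses left inverses of W'_{n:1}.  So a critical point with
   nonzero differential is a saddle, and one with zero differential inherits
   global optimality from ell0. *)

From HB Require Import structures.
From mathcomp Require Import all_boot all_order all_algebra.
From mathcomp Require Import all_classical all_reals all_analysis.
Import Order.TTheory GRing.Theory Num.Theory.
Import numFieldNormedType.Exports.
Local Open Scope ring_scope.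
Set Implicit Arguments. Unset Strict Implicit.

Definition set_layer (R : realType) (d : nat -> nat) (H : nat) (W : params R d H)
    (j : 'I_H.+1) (X : 'M[R]_(d j.+1, d j)) : params R d H :=
  @dfwith _ (fun i : 'I_H.+1 => 'M[R]_(d i.+1, d i)) W j X.
Arguments set_layer {R d H} W j X.

Section Layers.
Variables (R : realType) (d : nat -> nat) (H : nat).
Implicit Types (W : params R d H) (j : 'I_H.+1) (k n : nat).

(* prodAbove W k = W_{H+1} ... W_{k+1}.  The empty product of prodAbove_rec
   is the identity only at k = H.+1, the only place where it is reached. *)
Fixpoint prodAbove_rec W (n k : nat) : 'M[R]_(d H.+1, d k) :=
  match n with
  | 0 => conform_mx 0 (1%:M : 'M[R]_(d H.+1))
  | n.+1 => prodAbove_rec W n k.+1 *m Wnat W k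
  end.

Definition prodAbove W k := prodAbove_rec W (H.+1 - k) k.

Lemma WnatE W j : Wnat W j = W j.
Proof.
case: j => k hk; rewrite /Wnat /=.
generalize (erefl (k < H.+1)%N); case: {2 3}(k < H.+1)%N => [hk'|]; last by rewrite hk.
by rewrite (bool_irrelevance hk' hk).
Qed.

Lemma Wnat_oversize W k : (H.+1 <= k)%N -> Wnat W k = 0.
Proof.
rewrite leqNgt => /negPf k_big; rewrite /Wnat.
by generalize (erefl (k < H.+1)%N); case: {2 3}(k < H.+1)%N => // hk; rewrite hk in k_big.
Qed.

Lemma Wnat_set_layer W j X : Wnat (set_layer W j X) j = X.
Proof. by rewrite WnatE; apply: dfwith_in. Qed.

Lemma Wnat_set_layer_out W j X k :
  k != j -> Wnat (set_layer W j X) k = Wnat W k.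
Proof.
move=> neq_kj; have [hk|hk] := ltnP k H.+1; last by rewrite !Wnat_oversize.
change k with (nat_of_ord (Ordinal hk)); rewrite !WnatE; apply: dfwith_out.
by apply: contraNneq neq_kj => ->.
Qed.

Lemma set_layer_id W j : set_layer W j (W j) = W.
Proof. by apply: functional_extensionality_dep => i; rewrite /set_layer; case: dfwithP. Qed.

Lemma prodW_set_layer W j X k : (k <= j)%N -> prodW (set_layer W j X) k = prodW W k.
Proof.
elim: k => [//|k IHk] lt_kj /=.
by rewrite IHk ?(ltnW lt_kj) // Wnat_set_layer_out // ltn_eqF.
Qed.

Lemma prodW_set_layerS W j X : prodW (set_layer W j X) j.+1 = X *m prodW W j.
Proof. by rewrite /= Wnat_set_layer prodW_set_layer. Qed.

Lemma prodAbove_rec_set_layer W j X n k :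
  (j < k)%N -> prodAbove_rec (set_layer W j X) n k = prodAbove_rec W n k.
Proof.
elim: n k => [//|n IHn] k lt_jk /=.
by rewrite IHn ?(ltn_trans lt_jk (ltnSn k)) // Wnat_set_layer_out // gtn_eqF.
Qed.

Lemma prodAbove_set_layer W j X :
  prodAbove (set_layer W j X) j = prodAbove W j.+1 *m X.
Proof.
by rewrite /prodAbove subSn ?leq_ord //= prodAbove_rec_set_layer // Wnat_set_layer.
Qed.

Lemma prodAbove_top W : prodAbove W H.+1 = 1%:M.
Proof. by rewrite /prodAbove subnn /= conform_mx_id. Qed.

Lemma prodAll_split W k : (k <= H.+1)%N -> prodAll W = prodAbove W k *m prodW W k.
Proof.
rewrite /prodAbove => /subnK; move: (H.+1 - k)%N => n.
elim: n k => [|n IHn] k /= eq_nk.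
  by rewrite add0n in eq_nk; subst k; rewrite conform_mx_id mul1mx.
by rewrite -mulmxA (IHn k.+1) // addnS -addSn.
Qed.

Lemma prodAll_set_layer W j X :
  prodAll (set_layer W j X) = prodAbove W j.+1 *m X *m prodW W j.
Proof.
by rewrite (prodAll_split _ (ltnW (ltn_ord j))) prodAbove_set_layer prodW_set_layer.
Qed.

Lemma prodAll_set_layer_line W j X t :
  prodAll (set_layer W j (W j + t *: X)) =
  prodAll W + t *: (prodAbove W j.+1 *m X *m prodW W j).
Proof.
rewrite prodAll_set_layer -[in prodAll W](set_layer_id W j) prodAll_set_layer.
by rewrite mulmxDr mulmxDl -scalemxAr -scalemxAl.
Qed.

End Layers.

Lemma ball_line (R : realType) (V : normedModType R) (x y v : V) (e : R) :
  ball x e y -> exists2 r : R, 0 < r & forall t : R, `|t| < r -> ball x e (y + t *: v).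
Proof.
rewrite -ball_normE /= => xy_e.
exists ((e - `|x - y|) / (`|v| + 1)).
  by apply: divr_gt0; rewrite ?subr_gt0 // ltr_pwDl.
move=> t t_small; rewrite opprD addrA (le_lt_trans (ler_normD _ _)) // normrN normrZ.
rewrite -ltrBrDl; apply: (le_lt_trans (y := `|t| * (`|v| + 1))).
  by rewrite ler_wpM2l // lerDl.
by rewrite -ltr_pdivlMr // ltr_pwDl.
Qed.

Section FibreBall.
Variables (R : realType) (d : nat -> nat) (H : nat) (W0 : params R d H) (e : R).
Implicit Types (W : params R d H) (j : 'I_H.+1).

Definition fibre_ball W := prodAll W = prodAll W0 /\ forall j, ball (W0 j) e (W j).

Lemma set_layer_ball W j Y : (forall i, ball (W0 i) e (W i)) ->
  ball (W0 j) e Y -> forall i, ball (W0 i) e (set_layer W j Y i).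
Proof. by move=> W_e Y_e i; rewrite /set_layer; case: dfwithP. Qed.

Lemma fibre_ball_perturb W j N : fibre_ball W ->
  prodAbove W j.+1 *m N *m prodW W j = 0 ->
  exists2 t : R, t != 0 & fibre_ball (set_layer W j (W j + t *: N)).
Proof.
move=> [prodW0 W_e] flatN; have [r r_gt0 line_e] := ball_line N (W_e j).
exists (r / 2); first by rewrite mulf_neq0 ?invr_eq0 ?gt_eqF.
split; last first.
  apply: set_layer_ball => //; apply: line_e.
  by rewrite ger0_norm ?divr_ge0 ?ltW // ltr_pdivrMr // ltr_pMr // ltr1n.
by rewrite prodAll_set_layer_line flatN scaler0 addr0.
Qed.

Lemma fibre_ball_center : 0 < e -> fibre_ball W0.
Proof. by move=> e_gt0; split=> // j; apply: ballxx. Qed.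

End FibreBall.

Section RankDichotomy.
Variable F : fieldType.

Lemma left_inverse_or_left_kernel p q (M : 'M[F]_(p, q)) : (q <= p)%N ->
  (exists C : 'M[F]_(q, p), C *m M = 1%:M) \/ exists2 r : 'rV[F]_p, r != 0 & r *m M = 0.
Proof.
move=> le_qp; have [M_free | /negP] := boolP (row_free M).
  left; apply/row_fullP; rewrite /row_full eqn_leq rank_leq_col /=.
  by move: M_free => /eqP ->.
rewrite -kermx_eq0 => /negP /rowV0Pn [r /sub_kermxP rM r_nz].
by right; exists r.
Qed.

Lemma right_inverse_or_right_kernel p q (M : 'M[F]_(p, q)) : (p <= q)%N ->
  (exists B : 'M[F]_(q, p), M *m B = 1%:M) \/ exists2 c : 'cV[F]_q, c != 0 & M *m c = 0.
Proof.
move=> /(left_inverse_or_left_kernel M^T) [[C CM] | [r r_nz rM]].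
  by left; exists C^T; rewrite -[M]trmxK -trmx_mul CM trmx1.
by right; exists r^T; rewrite ?trmx_eq0 // -[M]trmxK -trmx_mul rM trmx0.
Qed.

Lemma row_right_inverse p (r : 'rV[F]_p) : r != 0 -> exists w : 'cV_p, r *m w = 1%:M.
Proof.
by move=> r_nz; apply/row_freeP; rewrite /row_free eqn_leq rank_leq_row lt0n mxrank_eq0.
Qed.

Lemma col_left_inverse p (c : 'cV[F]_p) : c != 0 -> exists u : 'rV_p, u *m c = 1%:M.
Proof.
by move=> c_nz; apply/row_fullP; rewrite /row_full eqn_leq rank_leq_col lt0n mxrank_eq0.
Qed.

End RankDichotomy.

Section LinearForms.
Variables (R : numFieldType) (p q : nat) (L : {linear 'M[R]_(p, q) -> R}).

Lemma linear_mx_eq0 : (forall i j, L (delta_mx i j) = 0) -> forall M, L M = 0.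
Proof.
move=> L_delta M; rewrite (matrix_sum_delta M) linear_sum big1 // => i _.
by rewrite linear_sum big1 // => j _; rewrite linearZ L_delta /= scaler0.
Qed.

Lemma linear_eq0_line M N t : L M = 0 -> L (M + t *: N) = 0 -> t != 0 -> L N = 0.
Proof.
move=> LM; rewrite linearD linearZ LM add0r => /eqP.
by rewrite mulf_eq0 => /orP[/eqP-> | /eqP]; rewrite ?eqxx.
Qed.

End LinearForms.

Section LineMinimum.
Variables (R : realType) (V : normedModType R) (f : V -> R).
Hypothesis f_diff : forall x, differentiable f x.

Lemma line_difference_quotient (P D : V) (t : R) :
  (fun h : R => h^-1 *: (f (P + (h *: 1 + t) *: D) - f (P + t *: D))) =
  (fun h : R => h^-1 *: (f (h *: D + (P + t *: D)) - f (P + t *: D))).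
Proof. by apply/funext => h; rewrite [h *: 1]mulr1 scalerDl addrCA. Qed.

Lemma derivable_line (P D : V) (t : R) : derivable (fun s : R => f (P + s *: D)) t 1.
Proof. by rewrite /derivable line_difference_quotient; apply: diff_derivable. Qed.

Lemma derive_line0 (P D : V) : 'D_1 (fun s : R => f (P + s *: D)) 0 = 'd f P D.
Proof.
by rewrite -deriveE // /derive line_difference_quotient scale0r addr0.
Qed.

Lemma diff_eq0_of_line_min (P D : V) (r : R) : 0 < r ->
  (forall t : R, `|t| < r -> f P <= f (P + t *: D)) -> 'd f P D = 0.
Proof.
move=> r_gt0 P_min; rewrite -derive_line0.
apply: derive_val; apply: (@derive1_at_min _ _ (- r) r).
- by rewrite ge0_cp // ltW.
- by move=> t _; apply: derivable_line.
- by rewrite in_itv /= oppr_lt0 r_gt0.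
move=> t; rewrite in_itv /= scale0r addr0 => /andP[lt_rt lt_tr].
by apply: P_min; rewrite ltr_norml lt_rt.
Qed.

End LineMinimum.

Section LayerVariations.
Variables (R : realType) (d : nat -> nat) (H : nat) (W0 : params R d H) (e : R).
Variable L : {linear 'M[R]_(d H.+1, d 0) -> R}.
Hypothesis L_layer : forall W, fibre_ball W0 e W ->
  forall (j : 'I_H.+1) X, L (prodAbove W j.+1 *m X *m prodW W j) = 0.

Definition vanish_below n := forall W, fibre_ball W0 e W ->
  forall V : 'M[R]_(d H.+1, d n), L (V *m prodW W n) = 0.

Definition vanish_above n := forall W, fibre_ball W0 e W ->
  forall Y : 'M[R]_(d n, d 0), L (prodAbove W n *m Y) = 0.

Lemma vanish_below_top : vanish_below H.
Proof.
by move=> W W_fib V; have := L_layer (j := ord_max) W_fib V; rewrite prodAbove_top mul1mx.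
Qed.

Lemma vanish_above_bottom : vanish_above 1.
Proof. by move=> W W_fib Y; have := L_layer (j := ord0) W_fib Y; rewrite mulmx1. Qed.

Lemma vanish_below_step n (lt_nH : (n < H)%N) : (d H.+1 <= d n.+1)%N ->
  vanish_below n.+1 -> vanish_below n.
Proof.
move=> wide below W W_fib; pose j : 'I_H.+1 := Ordinal (leqW lt_nH).
have [[B AB] | [c c_nz Ac]] := right_inverse_or_right_kernel (prodAbove W j.+1) wide.
  by move=> V; have := L_layer (j := j) W_fib (B *m V); rewrite mulmxA AB mul1mx.
suff L_eq0 : forall V, (L \o mulmxr (prodW W n)) V = 0 by [].
apply: linear_mx_eq0 => a b /=.
have [u uc] := col_left_inverse c_nz.
pose N := c *m delta_mx 0 b; pose P := delta_mx a 0 *m u.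
have PN : P *m N = delta_mx a b.
  by rewrite mulmxA -(mulmxA _ u) uc mulmx1 mul_delta_mx.
have [|t t_nz Wt_fib] := fibre_ball_perturb (j := j) (N := N) W_fib.
  by rewrite mulmxA Ac !mul0mx.
apply: (linear_eq0_line (M := P *m (W j *m prodW W n)) _ _ t_nz).
  by rewrite -(WnatE W j); apply: below.
have := below _ Wt_fib P; rewrite prodW_set_layerS.
by rewrite mulmxDl mulmxDr -scalemxAl -scalemxAr (mulmxA P N) PN.
Qed.

Lemma vanish_above_step n (le_nH : (n <= H)%N) :
  (d 0 <= d n)%N -> vanish_above n -> vanish_above n.+1.
Proof.
move=> wide above W W_fib.
pose j : 'I_H.+1 := Ordinal (leq_ltn_trans le_nH (ltnSn H)).
have [[C CB] | [r r_nz rB]] := left_inverse_or_left_kernel (prodW W j) wide.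
  by move=> Y; have := L_layer (j := j) W_fib (Y *m C); rewrite -!mulmxA CB mulmx1.
suff L_eq0 : forall Y, (L \o mulmx (prodAbove W n.+1)) Y = 0 by [].
apply: linear_mx_eq0 => a b /=.
have [w rw] := row_right_inverse r_nz.
pose N := delta_mx a 0 *m r; pose Q := w *m delta_mx 0 b.
have NQ : N *m Q = delta_mx a b.
  by rewrite mulmxA -(mulmxA _ r) rw mulmx1 mul_delta_mx.
have [|t t_nz Wt_fib] := fibre_ball_perturb (j := j) (N := N) W_fib.
  by rewrite -!mulmxA rB !mulmx0.
apply: (linear_eq0_line (M := prodAbove W n.+1 *m W j *m Q) _ _ t_nz).
  have := above W W_fib Q.
  by rewrite -[in prodAbove W n](set_layer_id W j) prodAbove_set_layer.
have := above _ Wt_fib Q; rewrite prodAbove_set_layer.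
by rewrite mulmxDr mulmxDl -scalemxAr -scalemxAl -(mulmxA _ N Q) NQ.
Qed.

Hypothesis e_gt0 : 0 < e.

Lemma linear_eq0_of_wide_output :
  (forall k, (1 <= k <= H)%N -> (d H.+1 <= d k)%N) -> forall V, L V = 0.
Proof.
move=> wide V; suff below0 : vanish_below 0.
  by have := below0 _ (fibre_ball_center _ e_gt0) V; rewrite mulmx1.
suff below_from_top : forall i, (i <= H)%N -> vanish_below (H - i).
  by rewrite -(subnn H); apply: below_from_top.
elim=> [|i IHi] lt_iH; first by rewrite subn0; apply: vanish_below_top.
apply: vanish_below_step; first by rewrite ltn_subrL; case: (H) lt_iH.
  by rewrite subnSK // wide // subn_gt0 lt_iH leq_subr.
by rewrite subnSK //; apply: IHi; apply: ltnW.
Qed.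

Lemma linear_eq0_of_wide_input :
  (forall k, (1 <= k <= H)%N -> (d 0 <= d k)%N) -> forall V, L V = 0.
Proof.
move=> wide V; suff aboveH : vanish_above H.+1.
  by have := aboveH _ (fibre_ball_center _ e_gt0) V; rewrite prodAbove_top mul1mx.
suff above_from_bottom : forall n, (n <= H)%N -> vanish_above n.+1.
  exact: above_from_bottom.
elim=> [|n IHn] lt_nH; first exact: vanish_above_bottom.
by apply: vanish_above_step => //; [apply: wide | apply: IHn; apply: ltnW].
Qed.

Theorem linear_eq0_of_fibre :
  (forall k, (1 <= k <= H)%N -> (minn (d 0) (d H.+1) <= d k)%N) -> forall V, L V = 0.
Proof.
move=> wide; have [le_out_in | lt_in_out] := leqP (d H.+1) (d 0).
  by apply: linear_eq0_of_wide_output => k /wide; rewrite (minn_idPr le_out_in).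
by apply: linear_eq0_of_wide_input => k /wide; rewrite (minn_idPl (ltnW lt_in_out)).
Qed.

End LayerVariations.

Section DeepLinearLoss.
Variables (R : realType) (d : nat -> nat) (H : nat).
Hypothesis wide : forall k, (1 <= k <= H)%N -> (minn (d 0) (d H.+1) <= d k)%N.
Implicit Types W : params R d H.

Lemma diff_eq0_of_local_min (ell0 : 'M[R]_(d H.+1, d 0) -> R) W :
  (forall M, differentiable ell0 M) ->
  local_min (loss ell0) W -> 'd ell0 (prodAll W) = 0 :> (_ -> R).
Proof.
move=> ell0_diff [e e_gt0 W_min]; apply/funext => V.
apply: (linear_eq0_of_fibre (W0 := W) _ e_gt0 wide) => W' [prodW' W'_e] j X.
have [r r_gt0 line_e] := ball_line X (W'_e j).
rewrite -prodW'; apply: (diff_eq0_of_line_min ell0_diff r_gt0) => t t_small.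
rewrite -prodAll_set_layer_line {1}prodW'; apply: W_min.
by apply: set_layer_ball => //; apply: line_e.
Qed.

Lemma diff_eq0_of_local_max (ell0 : 'M[R]_(d H.+1, d 0) -> R) W :
  (forall M, differentiable ell0 M) ->
  local_max (loss ell0) W -> 'd ell0 (prodAll W) = 0 :> (_ -> R).
Proof.
move=> ell0_diff [e e_gt0 W_max]; apply: oppr_inj; rewrite oppr0 -diffN //.
apply: (@diff_eq0_of_local_min (- ell0)) => [M|]; first exact: differentiableN.
by exists e => // W' /W_max; rewrite /loss !fctE lerN2.
Qed.

Lemma saddle_point_of_diff_neq0 (ell0 : 'M[R]_(d H.+1, d 0) -> R) W :
  (forall M, differentiable ell0 M) ->
  crit_point (loss ell0) W -> 'd ell0 (prodAll W) <> 0 :> (_ -> R) ->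
  saddle_point (loss ell0) W.
Proof.
move=> ell0_diff W_crit diff_neq0; split=> //; split.
  by move/(diff_eq0_of_local_min ell0_diff).
by move/(diff_eq0_of_local_max ell0_diff).
Qed.

End DeepLinearLoss.

Unset Implicit Arguments.

Theorem corollary2 (R : realType) (H : nat) (d : nat -> nat)
  (hH : (1 <= H)%N)
  (hwidth : forall j : nat, (1 <= j <= H)%N -> (minn (d 0%N) (d H.+1) <= d j)%N)
  (ell0 : 'M[R]_(d H.+1, d 0%N) -> R)
  (hdiff : forall M : 'M[R]_(d H.+1, d 0%N), differentiable ell0 M) :
  ((forall M : 'M[R]_(d H.+1, d 0%N), 'd ell0 M = 0 :> ('M[R]_(d H.+1, d 0%N) -> R) ->
      forall M' : 'M[R]_(d H.+1, d 0%N), ell0 M <= ell0 M') ->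
    forall W : params R d H, crit_point (loss ell0) W ->
      ('d ell0 (prodAll W) <> 0 :> ('M[R]_(d H.+1, d 0%N) -> R) ->
         saddle_point (loss ell0) W) /\
      ('d ell0 (prodAll W) = 0 :> ('M[R]_(d H.+1, d 0%N) -> R) ->
         global_min (loss ell0) W))
  /\
  ((forall M : 'M[R]_(d H.+1, d 0%N), 'd ell0 M = 0 :> ('M[R]_(d H.+1, d 0%N) -> R) ->
      forall M' : 'M[R]_(d H.+1, d 0%N), ell0 M' <= ell0 M) ->
    forall W : params R d H, crit_point (loss ell0) W ->
      ('d ell0 (prodAll W) <> 0 :> ('M[R]_(d H.+1, d 0%N) -> R) ->
         saddle_point (loss ell0) W) /\
      ('d ell0 (prodAll W) = 0 :> ('M[R]_(d H.+1, d 0%N) -> R) ->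
         global_max (loss ell0) W)).
Proof.
split=> ell0_opt W W_crit; split=> [|/ell0_opt W_opt W'].
- exact: (saddle_point_of_diff_neq0 hwidth hdiff W_crit).
- exact: W_opt.
- exact: (saddle_point_of_diff_neq0 hwidth hdiff W_crit).
- exact: W_opt.
Qed.
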